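(* Let $L$ be finite-dimensional, $A=A_1\otimes\cdots\otimes A_n$, $\mathcal{E}_{L\to A}$ a completely positive trace-preserving map with Stinespring isometry $V:L\to A\otimes F$ (so $\mathcal{E}(\cdot)=\operatorname{tr}_F(V(\cdot)V^\dagger)$). Let $T_L$ be an observable on $L$ and $T_A=\sum_\alpha T_\alpha$, each $T_\alpha$ acting on $A_\alpha=\bigotimes_{i\in\alpha}A_i$. Assume: there are $\nu\in\mathbb{R},\delta\geq0$ with $\|(T_L-\nu\mathbb{1}_L)-\mathcal{E}^\dagger(T_A)\|_\infty\leq\delta$; for cut-offs $t_\alpha^-\le t_\alpha^+$ there is $\eta\geq0$ with $\left|\operatorname{tr}\left(\sum_\alpha(T_\alpha-t_\alpha\mathbb{1})\Pi_\alpha^\perp\mathcal{E}(\sigma_L)\right)\right|\leq\eta$ for all states $\sigma_L$, where $\Pi_\alpha^\perp$ projects onto eigenspaces of $T_\alpha$ with eigenvalues outside $[t_\alpha^-,t_\alpha^+]$ and $t_\alpha=(t_\alpha^-+t_\alpha^+)/2$; and $\{q_\alpha\}$ is a probability distribution with $q_\alpha>0$ for each $\alpha$ with a term $T_\alpha$. Consider the channel $$\mathcal{C}(\cdot)=\sum_\alpha q_\alpha|\alpha\rangle\langle\alpha|_{C'}\otimes\operatorname{tr}_{A\setminus A_\alpha}(V(\cdot)V^\dagger),$$ whose output is on $C'\otimes E\otimes F$ with each $A_\alpha$ isometrically embedded in a system $E$ (this is a complementary channel of the encoding followed by the erasure noise $\sum_\alpha q_\alpha|\alpha\rangle\langle\alpha|_C\otimes|\phi_\alpha\rangle\langle\phi_\alpha|_{A_\alpha}\otimes\operatorname{tr}_{A_\alpha}(\cdot)$).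 Then there exists an observable $Z_{C'E}$ with $$\left\|\mathcal{C}^\dagger(\mathbb{1}_F\otimes Z_{C'E})-(T_L-\nu'\mathbb{1}_L)\right\|_\infty\leq\delta+\eta,\qquad\|Z_{C'E}\|_\infty\leq\max_\alpha\frac{\Delta T_\alpha}{2q_\alpha},$$ where $\nu'=\nu+\sum_\alpha(t_\alpha^-+t_\alpha^+)/2$ and $\Delta T_\alpha=t_\alpha^+-t_\alpha^-$.
   Context: $\mathcal{E}^\dagger$ and $\mathcal{C}^\dagger$ denote the adjoint (Heisenberg-picture) maps. *)

(* Finite-dimensional quantum systems are modelled by finite
   types of basis labels; operators are plain functions I -> J -> C
   (matrices indexed by finite types) over a numeric closed field C
   (e.g. the complex numbers complex R for R : realType). *)
From HB Require Import structures.
From mathcomp Require Import all_boot all_order all_algebra.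
Set Implicit Arguments. Unset Strict Implicit. Unset Printing Implicit Defensive.
Import Order.TTheory GRing.Theory Num.Theory.
Local Open Scope ring_scope.

Section Ops.
Variable C : numClosedFieldType.

(* operator from span(J) to span(I): an I x J matrix *)
Definition op (I J : finType) := I -> J -> C.

Definition opmul (I J K : finType) (X : op I J) (Y : op J K) : op I K :=
  fun i k => \sum_j X i j * Y j k.
Definition opadj (I J : finType) (X : op I J) : op J I := fun j i => (X i j)^*.
Definition opid (I : finType) : op I I := fun i j => (i == j)%:R.
Definition opadd (I J : finType) (X Y : op I J) : op I J := fun i j => X i j + Y i j.
Definition opsub (I J : finType) (X Y : op I J) : op I J := fun i j => X i j - Y i j.
Definition opscale (I J : finType) (a : C) (X : op I J) : op I J := fun i j => a * X i j.
Definition optr (I : finType) (X : op I I) : C := \sum_i X i i.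
Definition unitop (I J : finType) (i : I) (j : J) : op I J :=
  fun k l => ((k == i) && (l == j))%:R.
Definition optens (I1 J1 I2 J2 : finType) (X : op I1 J1) (Y : op I2 J2)
  : op (I1 * I2)%type (J1 * J2)%type := fun a b => X a.1 b.1 * Y a.2 b.2.

Definition is_hermitian (I : finType) (X : op I I) := forall i j, X j i = (X i j)^*.
Definition is_isometry (I J : finType) (V : op I J) :=
  forall j j', opmul (opadj V) V j j' = (j == j')%:R.
Definition psd (I : finType) (X : op I I) :=
  forall v : I -> C, 0 <= \sum_i \sum_j (v i)^* * X i j * v j.
Definition is_state (I : finType) (X : op I I) :=
  [/\ is_hermitian X, psd X & optr X = 1].
(* ||X||_oo <= c, i.e. sup_{v} ||X v|| / ||v|| <= c *)
Definition opnorm_le (I J : finType) (X : op I J) (c : C) :=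
  0 <= c /\ forall v : J -> C,
    \sum_i `|\sum_j X i j * v j| ^+ 2 <= c ^+ 2 * \sum_j `|v j| ^+ 2.

Definition ptrace2 (I F : finType) (X : op (I * F)%type (I * F)%type) : op I I :=
  fun i i' => \sum_f X (i, f) (i', f).

(* Heisenberg-picture adjoint of a linear map Phi on operators, defined by
   tr(Phi^dag(Y) rho) = tr(Y Phi(rho)) for all rho (tested on matrix units) *)
Definition heis (I J : finType) (Phi : op I I -> op J J) (Y : op J J) : op I I :=
  fun i j => optr (opmul Y (Phi (unitop j i))).

(* P is the projector onto the eigenspaces of X with eigenvalues outside
   [tm, tp]: it kills eigenvectors with eigenvalue in [tm,tp] and fixes the
   other eigenvectors (this determines P since X is diagonalizable). *)
Definition spec_proj_out (I : finType) (X : op I I) (tm tp : C) (P : op I I) :=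
  forall (v : I -> C) (lam : C), (forall i, \sum_j X i j * v j = lam * v i) ->
    if (tm <= lam <= tp) then (forall i, \sum_j P i j * v j = 0)
    else (forall i, \sum_j P i j * v j = v i).

(* The composite system A = A_1 (x) ... (x) A_n, dim A_i = d i *)
Variables (n : nat) (d : 'I_n -> nat).

Definition basisA : finType := {dffun forall i : 'I_n, 'I_(d i)}.
Definition basisSub (al : {set 'I_n}) : finType :=
  {dffun forall j : {i : 'I_n | i \in al}, 'I_(d (val j))}.
Definition res (al : {set 'I_n}) (x : basisA) : basisSub al :=
  [ffun j => x (val j)].
Definition agree_out (al : {set 'I_n}) (x y : basisA) : bool :=
  [forall i, (i \notin al) ==> (x i == y i)].
(* X_alpha (x) 1_{A \ A_alpha} as an operator on A *)
Definition embed (al : {set 'I_n}) (X : op (basisSub al) (basisSub al))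
  : op basisA basisA :=
  fun x y => if agree_out al x y then X (res al x) (res al y) else 0.
(* partial trace over A \ A_alpha, keeping A_alpha (x) F *)
Definition ptrace_out (al : {set 'I_n}) (F : finType)
  (X : op (basisA * F)%type (basisA * F)%type) : op (basisSub al * F)%type (basisSub al * F)%type :=
  fun a b => \sum_(x | res al x == a.1)
               \sum_(y | (res al y == b.1) && agree_out al x y) X (x, a.2) (y, b.2).

Variables (L F : finType).
Definition enc (V : op (basisA * F)%type L) (rho : op L L) : op basisA basisA :=
  ptrace2 (opmul (opmul V rho) (opadj V)).

Definition TA (S : {set {set 'I_n}}) (T : forall al, op (basisSub al) (basisSub al))
  : op basisA basisA := fun x y => \sum_(al in S) embed (T al) x y.

Definition etaop (S : {set {set 'I_n}}) (T : forall al, op (basisSub al) (basisSub al))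
  (tm tp : {set 'I_n} -> C) (P : forall al, op (basisSub al) (basisSub al))
  : op basisA basisA :=
  fun x y => \sum_(al in S)
    embed (opmul (opsub (T al) (opscale ((tm al + tp al) / 2) (@opid (basisSub al)))) (P al)) x y.

Variable E : finType.
(* C(rho) = sum_alpha q_alpha |alpha><alpha|_{C'} (x) (W_alpha (x) 1_F)
            tr_{A\A_alpha}(V rho V^dag) (W_alpha (x) 1_F)^dag,
   output on C' (x) E (x) F, with C' having basis {set 'I_n} *)
Definition compl_chan (q : {set 'I_n} -> C)
  (W : forall al, op E (basisSub al)) (V : op (basisA * F)%type L) (rho : op L L)
  : op (({set 'I_n} * E) * F)%type (({set 'I_n} * E) * F)%type :=
  fun a b =>
    if a.1.1 == b.1.1 then
      q a.1.1 * opmul (opmul (optens (W a.1.1) (@opid F))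
                             (@ptrace_out a.1.1 F (opmul (opmul V rho) (opadj V))))
                      (opadj (optens (W a.1.1) (@opid F))) (a.1.2, a.2) (b.1.2, b.2)
    else 0.

End Ops.
Arguments opid {C} I _ _.

(* Split each [T_al - t_al] into its part [M_al] on the eigenspaces of [T_al] with
   eigenvalue in [[tm_al, tp_al]], of norm at most [(tp_al - tm_al)/2], and the remainder
   [(T_al - t_al) Pi_al^perp].  The decoder [Z = sum_al |al><al| (x) W_al M_al W_al^dag / q_al]
   is block diagonal, which gives the bound on [||Z||], and the weight [q_al] with which the
   complementary channel reveals [A_al] cancels the [1/q_al]:
     [C^dag(1 (x) Z) = sum_al E^dag(M_al)
                     = E^dag(T_A) - sum_al t_al - E^dag(sum_al (T_al - t_al) Pi_al^perp)].
   The first two terms are [delta]-close to [T_L - nu'], and the last one is Hermitian with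
   expectation at most [eta] in every state, hence of norm at most [eta]. *)

From HB Require Import structures.
From mathcomp Require Import all_boot all_order all_algebra.
From mathcomp Require Import sesquilinear spectral ring.
From Stdlib Require Import FunctionalExtensionality.
Set Implicit Arguments. Unset Strict Implicit. Unset Printing Implicit Defensive.
Import Order.TTheory GRing.Theory Num.Theory Num.Def.
Local Open Scope ring_scope.

Section OperatorAlgebra.
Variable C : numClosedFieldType.
Implicit Types I J K M : finType.

Lemma op_ext I J (X Y : op C I J) : (forall i j, X i j = Y i j) -> X = Y.
Proof. by move=> XY; do 2!apply: functional_extensionality => ?; apply: XY. Qed.

Lemma sum_deltar I (f : I -> C) j : \sum_l f l * (l == j)%:R = f j.
Proof.
by rewrite (bigD1 j) //= eqxx mulr1 big1 ?addr0 // => l /negbTE ->; rewrite mulr0.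
Qed.

Lemma sum_deltal I (f : I -> C) j : \sum_l (j == l)%:R * f l = f j.
Proof.
by rewrite -(sum_deltar f); apply: eq_bigr => l _; rewrite mulrC eq_sym.
Qed.

Lemma sum_pair I J (f : I * J -> C) : \sum_p f p = \sum_i \sum_j f (i, j).
Proof. by rewrite pair_big; apply: eq_bigr => -[]. Qed.

Lemma opmulA I J K M (X : op C I J) (Y : op C J K) (Z : op C K M) :
  opmul (opmul X Y) Z = opmul X (opmul Y Z).
Proof.
apply: op_ext => i m; rewrite /opmul.
under eq_bigr do rewrite big_distrl.
rewrite exchange_big; apply: eq_bigr => j _ /=; rewrite big_distrr.
by apply: eq_bigr => k _ /=; rewrite mulrA.
Qed.

Lemma opmul1l I J (X : op C I J) : opmul (opid I) X = X.
Proof. by apply: op_ext => i j; rewrite /opmul /opid sum_deltal. Qed.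

Lemma opmul1r I J (X : op C I J) : opmul X (opid J) = X.
Proof. by apply: op_ext => i j; rewrite /opmul /opid sum_deltar. Qed.

Lemma opsub_subK I J (X Y : op C I J) : opsub X (opsub X Y) = Y.
Proof. by apply: op_ext => i j; rewrite /opsub opprB addrC subrK. Qed.

Lemma opscale0 I J (X : op C I J) : opscale 0 X = fun _ _ => 0.
Proof. by apply: op_ext => i j; rewrite /opscale mul0r. Qed.

Lemma opmulZl I J K (a : C) (X : op C I J) (Y : op C J K) :
  opmul (opscale a X) Y = opscale a (opmul X Y).
Proof.
apply: op_ext => i k; rewrite /opmul /opscale big_distrr.
by apply: eq_bigr => j _ /=; rewrite mulrA.
Qed.

Lemma opmulZr I J K (a : C) (X : op C I J) (Y : op C J K) :
  opmul X (opscale a Y) = opscale a (opmul X Y).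
Proof.
apply: op_ext => i k; rewrite /opmul /opscale big_distrr.
by apply: eq_bigr => j _ /=; rewrite mulrCA.
Qed.

Lemma optrC I J (X : op C I J) (Y : op C J I) :
  optr (opmul X Y) = optr (opmul Y X).
Proof.
rewrite /optr /opmul exchange_big.
by apply: eq_bigr => j _; apply: eq_bigr => i _; rewrite mulrC.
Qed.

Lemma optr_unitop I (X : op C I I) i j : optr (opmul X (unitop C i j)) = X j i.
Proof.
rewrite /optr /opmul /unitop (bigD1 j) //= [X in _ + X]big1 ?addr0.
  by rewrite (bigD1 i) //= !eqxx mulr1 big1 ?addr0 // => l /negbTE ->; rewrite mulr0.
by move=> k /negbTE kj; apply: big1 => l _; rewrite kj andbF mulr0.
Qed.

Lemma opadjK I J (X : op C I J) : opadj (opadj X) = X.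
Proof. by apply: op_ext => i j; rewrite /opadj conjCK. Qed.

Lemma opadj_mul I J K (X : op C I J) (Y : op C J K) :
  opadj (opmul X Y) = opmul (opadj Y) (opadj X).
Proof.
apply: op_ext => k i; rewrite /opadj /opmul rmorph_sum.
by apply: eq_bigr => j _; rewrite rmorphM mulrC.
Qed.

Lemma opadj_id I : opadj (opid I) = opid I :> op C _ _.
Proof. by apply: op_ext => i j; rewrite /opadj /opid eq_sym conjC_nat. Qed.

Lemma hermitianP I (X : op C I I) : is_hermitian X <-> opadj X = X.
Proof.
split=> [HX|XE i j]; first by apply: op_ext => i j; rewrite /opadj HX conjCK.
by rewrite -[in LHS]XE.
Qed.

Lemma isometryP I J (W : op C I J) : is_isometry W <-> opmul (opadj W) W = opid J.
Proof. by split=> [HW|WE j j']; [apply: op_ext | rewrite WE]. Qed.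

Lemma isometry_conjK I J (W : op C I J) (X : op C J J) : is_isometry W ->
  opmul (opmul (opadj W) (opmul (opmul W X) (opadj W))) W = X.
Proof.
move=> /isometryP HW.
by rewrite -!opmulA HW opmul1l opmulA HW opmul1r.
Qed.

Lemma hermitian_sub I (X Y : op C I I) :
  is_hermitian X -> is_hermitian Y -> is_hermitian (opsub X Y).
Proof. by move=> HX HY i j; rewrite /opsub HX HY rmorphB. Qed.

Lemma hermitian_scale_id I (a : C) : a \is Num.real -> is_hermitian (opscale a (opid I)).
Proof.
by move=> ar i j; rewrite /opscale /opid rmorphM /= conj_Creal // conjC_nat eq_sym.
Qed.

Lemma isometry_mul I J K (W : op C I J) (U : op C J K) :
  is_isometry W -> is_isometry U -> is_isometry (opmul W U).
Proof.
move=> /isometryP HW /isometryP HU; apply/isometryP.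
by rewrite opadj_mul opmulA -(opmulA (opadj W)) HW opmul1l.
Qed.

Lemma optens_mul I1 J1 K1 I2 J2 K2 (X1 : op C I1 J1) (Y1 : op C J1 K1)
  (X2 : op C I2 J2) (Y2 : op C J2 K2) :
  opmul (optens X1 X2) (optens Y1 Y2) = optens (opmul X1 Y1) (opmul X2 Y2).
Proof.
apply: op_ext => a b; rewrite /opmul /optens sum_pair big_distrl.
apply: eq_bigr => j1 _ /=; rewrite big_distrr; apply: eq_bigr => j2 _ /=.
by rewrite mulrACA.
Qed.

Lemma optens_adj I1 J1 I2 J2 (X1 : op C I1 J1) (X2 : op C I2 J2) :
  opadj (optens X1 X2) = optens (opadj X1) (opadj X2).
Proof. by apply: op_ext => a b; rewrite /opadj /optens rmorphM. Qed.

Lemma optens_id I J : optens (opid I) (opid J) = opid (I * J)%type :> op C _ _.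
Proof.
apply: op_ext => -[i j] [i' j']; rewrite /optens /opid /=.
by rewrite xpair_eqE; case: (i == i'); case: (j == j'); rewrite ?mulr1 ?mulr0 ?mul0r.
Qed.

End OperatorAlgebra.

Section Spectral.
Variable C : numClosedFieldType.
Implicit Types I J K : finType.

Definition diagop I K (U : op C I K) (c : K -> C) : op C I I :=
  fun i j => \sum_k c k * U i k * (U j k)^*.

Lemma diagop_hermitian I K (U : op C I K) (c : K -> C) :
  (forall k, c k \is Num.real) -> is_hermitian (diagop U c).
Proof.
move=> cr i j; rewrite /diagop rmorph_sum; apply: eq_bigr => k _.
by rewrite !rmorphM /= conjCK (conj_Creal (cr k)) mulrAC.
Qed.

Lemma diagop_eigen I K (U : op C I K) (c : K -> C) : is_isometry U ->
  forall k i, \sum_j diagop U c i j * U j k = c k * U i k.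
Proof.
move=> /isometryP HU k i; rewrite /diagop.
under eq_bigr do rewrite big_distrl.
rewrite exchange_big /= -[RHS](sum_deltar (fun l => c l * U i l)).
apply: eq_bigr => l _; under eq_bigr do rewrite -mulrA; rewrite -big_distrr /=.
by have /(congr1 (fun X => X l k)) := HU; rewrite /opmul /opadj /opid => ->.
Qed.

Lemma diagop_conj I J K (W : op C I J) (U : op C J K) (c : K -> C) :
  opmul (opmul W (diagop U c)) (opadj W) = diagop (opmul W U) c.
Proof.
apply: op_ext => i i'; rewrite /opmul /opadj /diagop.
pose t k j j' := c k * W i j * U j k * ((W i' j')^* * (U j' k)^*).
transitivity (\sum_j' \sum_j \sum_k t k j j').
  apply: eq_bigr => j' _; rewrite big_distrl; apply: eq_bigr => j _ /=.
  by rewrite big_distrr big_distrl; apply: eq_bigr => k _; rewrite /t /=; ring.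
under eq_bigr do rewrite exchange_big.
rewrite exchange_big; apply: eq_bigr => k _ /=.
rewrite rmorph_sum big_distrr; apply: eq_bigr => j' _ /=.
rewrite big_distrr big_distrl; apply: eq_bigr => j _ /=.
by rewrite rmorphM /t; ring.
Qed.

Lemma diagop_scale I K (U : op C I K) (a : C) (c : K -> C) :
  opscale a (diagop U c) = diagop U (fun k => a * c k).
Proof.
apply: op_ext => i j; rewrite /opscale /diagop big_distrr.
by apply: eq_bigr => k _ /=; rewrite !mulrA.
Qed.

Lemma diagop_sub I K (U : op C I K) (c c' : K -> C) :
  opsub (diagop U c) (diagop U c') = diagop U (fun k => c k - c' k).
Proof.
apply: op_ext => i j; rewrite /opsub /diagop -sumrB.
by apply: eq_bigr => k _; rewrite !mulrBl.
Qed.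

Lemma diagop_mul I K (U : op C I K) (c c' : K -> C) : is_isometry U ->
  opmul (diagop U c) (diagop U c') = diagop U (fun k => c k * c' k).
Proof.
move=> HU; apply: op_ext => i j; rewrite /opmul {2}/diagop.
under eq_bigr do rewrite big_distrr /=.
rewrite exchange_big; apply: eq_bigr => k _ /=.
rewrite (eq_bigr (fun l => diagop U c i l * U l k * (c' k * (U j k)^*))).
  by rewrite -big_distrl /= diagop_eigen //; ring.
by move=> l _; ring.
Qed.

Lemma diagop_const I K (U : op C I K) (t : C) :
  opmul U (opadj U) = opid I -> diagop U (fun _ => t) = opscale t (opid I).
Proof.
move=> UU; apply: op_ext => i j; rewrite /opscale -UU /opmul /opadj /diagop big_distrr.
by apply: eq_bigr => k _ /=; ring.
Qed.

Definition op_matrix I (X : op C I I) : 'M[C]_#|I| :=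
  \matrix_(a, b) X (enum_val a) (enum_val b).

(* [spectralmx] holds the conjugated eigenvectors as rows; [eigvecs X] has them as columns. *)
Definition eigvecs I (X : op C I I) : op C I I :=
  fun i k => (spectralmx (op_matrix X) (enum_rank k) (enum_rank i))^*.

Definition eigvals I (X : op C I I) : I -> C :=
  fun k => spectral_diag (op_matrix X) 0 (enum_rank k).

Lemma sum_enum_val I (f : I -> C) : \sum_i f i = \sum_(a < #|I|) f (enum_val a).
Proof.
by rewrite (reindex (@enum_val I predT)) //; exists enum_rank => x _;
  rewrite ?enum_valK ?enum_rankK.
Qed.

Lemma hermitian_spectral I (X : op C I I) : is_hermitian X ->
  [/\ is_isometry (eigvecs X),
      opmul (eigvecs X) (opadj (eigvecs X)) = opid I,
      (forall k, eigvals X k \is Num.real)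
    & X = diagop (eigvecs X) (eigvals X)].
Proof.
move=> HX; rewrite /eigvecs /eigvals.
set A := op_matrix X.
have Ah : A \is hermsymmx.
  apply/is_hermitianmxP; rewrite expr0 scale1r; apply/matrixP => a b.
  by rewrite /A /op_matrix !mxE HX.
pose S := spectralmx A; pose dd := spectral_diag A.
have Su : S \is unitarymx := spectral_unitarymx A.
have SS : S *m (map_mx conjC S^T) = 1%:M by apply/unitarymxP.
have SS' : (map_mx conjC S^T) *m S = 1%:M.
  by rewrite -(invmx_unitary Su) mulVmx // spectral_unit.
have AE : A = map_mx conjC S^T *m diag_mx dd *m S.
  by rewrite -(invmx_unitary Su); apply/orthomx_spectralP/hermitian_normalmx.
split.
- move=> j j'; rewrite /opmul /opadj sum_enum_val.
  have /matrixP/(_ (enum_rank j) (enum_rank j')) := SS.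
  rewrite !mxE (inj_eq enum_rank_inj) => <-.
  by apply: eq_bigr => a _; rewrite !mxE enum_valK conjCK mulrC.
- apply: op_ext => i j; rewrite /opmul /opadj /opid sum_enum_val.
  have /matrixP/(_ (enum_rank i) (enum_rank j)) := SS'.
  rewrite !mxE (inj_eq enum_rank_inj) => <-.
  by apply: eq_bigr => a _; rewrite !mxE enum_valK conjCK.
- by move=> k; apply: (mxOverP (hermitian_spectral_diag_real Ah)).
- apply: op_ext => i j; rewrite /diagop.
  have /matrixP/(_ (enum_rank i) (enum_rank j)) := AE.
  rewrite /A /op_matrix !mxE !enum_rankK => ->; rewrite [RHS]sum_enum_val.
  apply: eq_bigr => a _; rewrite !mxE big_distrl /=.
  rewrite (bigD1 a) //= big1 ?addr0; last first.
    by move=> b /negbTE nb; rewrite !mxE nb mulr0n mulr0 mul0r.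
  by rewrite !mxE eqxx mulr1n enum_valK conjCK; ring.
Qed.

End Spectral.

Section OperatorNorm.
Variable C : numClosedFieldType.
Implicit Types I J K : finType.

Lemma isometry_norm I K (W : op C I K) (y : K -> C) : is_isometry W ->
  \sum_i `|\sum_k W i k * y k| ^+ 2 = \sum_k `|y k| ^+ 2.
Proof.
move=> HW.
under eq_bigr do rewrite normCK rmorph_sum big_distrl /=.
under eq_bigr do under eq_bigr do rewrite big_distrr /=.
rewrite exchange_big; apply: eq_bigr => k _; rewrite exchange_big /=.
rewrite normCK -[RHS](sum_deltar (fun l => y k * (y l)^*)); apply: eq_bigr => l _ /=.
have := HW l k; rewrite /opmul /opadj eq_sym => <-.
rewrite big_distrr; apply: eq_bigr => i _ /=; rewrite rmorphM /=; ring.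
Qed.

Lemma isometry_adj_norm I K (W : op C I K) (v : I -> C) : is_isometry W ->
  \sum_k `|\sum_j (W j k)^* * v j| ^+ 2 <= \sum_j `|v j| ^+ 2.
Proof.
move=> HW; pose a k := \sum_j (W j k)^* * v j; pose p i := \sum_k W i k * a k.
have pv : \sum_i p i * (v i)^* = \sum_k `|a k| ^+ 2.
  under eq_bigr do rewrite big_distrl /=.
  rewrite exchange_big; apply: eq_bigr => k _ /=.
  rewrite normCK /a rmorph_sum big_distrr; apply: eq_bigr => j _ /=.
  by rewrite rmorphM /= conjCK; ring.
have a_real : \sum_k `|a k| ^+ 2 \is Num.real.
  by rewrite ger0_real // sumr_ge0 // => k _; exact: exprn_ge0.
have vp : \sum_i v i * (p i)^* = \sum_k `|a k| ^+ 2.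
  rewrite -[RHS](conj_Creal a_real) -pv rmorph_sum.
  by apply: eq_bigr => i _; rewrite rmorphM /= conjCK mulrC.
have pp : \sum_i `|p i| ^+ 2 = \sum_k `|a k| ^+ 2 by apply: isometry_norm.
(* Pythagoras for the orthogonal projection [p = W W^dag v] of [v]. *)
have : 0 <= \sum_i `|v i - p i| ^+ 2 by apply: sumr_ge0 => i _; apply: exprn_ge0.
have -> : \sum_i `|v i - p i| ^+ 2 = \sum_i `|v i| ^+ 2 - \sum_k `|a k| ^+ 2.
  transitivity (\sum_i (`|v i| ^+ 2 - v i * (p i)^* - p i * (v i)^* + `|p i| ^+ 2)).
    by apply: eq_bigr => i _; rewrite !normCK rmorphB /=; ring.
  by rewrite !big_split /= !sumrN pv vp pp; ring.
by rewrite subr_ge0.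
Qed.

Lemma opnorm_diagop I K (W : op C I K) (c : K -> C) (b : C) :
  is_isometry W -> 0 <= b -> (forall k, `|c k| <= b) -> opnorm_le (diagop W c) b.
Proof.
move=> HW b0 cb; split=> // v; pose a k := \sum_j (W j k)^* * v j.
have -> : \sum_i `|\sum_j diagop W c i j * v j| ^+ 2 =
          \sum_i `|\sum_k W i k * (c k * a k)| ^+ 2.
  apply: eq_bigr => i _; congr (`|_| ^+ 2); rewrite /diagop.
  under eq_bigr do rewrite big_distrl /=.
  rewrite exchange_big; apply: eq_bigr => k _ /=; rewrite /a !big_distrr.
  by apply: eq_bigr => j _ /=; ring.
rewrite isometry_norm //; apply: (@le_trans _ _ (\sum_k b ^+ 2 * `|a k| ^+ 2)).
  apply: ler_sum => k _; rewrite normrM exprMn.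
  by rewrite ler_wpM2r ?exprn_ge0 // lerXn2r ?nnegrE.
by rewrite -big_distrr ler_wpM2l ?exprn_ge0 ?isometry_adj_norm.
Qed.

Lemma opnorm_le_trans I J (X : op C I J) (a c : C) :
  opnorm_le X a -> a <= c -> opnorm_le X c.
Proof.
move=> [a0 Xa] ac; have c0 := le_trans a0 ac; split=> // v.
apply: le_trans (Xa v) _; rewrite ler_wpM2r ?lerXn2r ?nnegrE //.
by apply: sumr_ge0 => j _; exact: exprn_ge0.
Qed.

Lemma opnorm_le0 I J (X : op C I J) : opnorm_le X 0 -> X = (fun _ _ => 0).
Proof.
move=> [_ X0]; apply: op_ext => i j0.
pose v j : C := (j == j0)%:R.
have Xv : X i j0 = \sum_j X i j * v j by rewrite sum_deltar.
have /eqP : \sum_i `|\sum_j X i j * v j| ^+ 2 = 0.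
  apply/eqP; rewrite eq_le sumr_ge0 ?andbT => [|k _]; last exact: exprn_ge0.
  by have := X0 v; rewrite expr0n /= mul0r.
rewrite psumr_eq0 => [|k _]; last exact: exprn_ge0.
by move/allP/(_ i (mem_index_enum i)); rewrite /= sqrf_eq0 normr_eq0 Xv => /eqP.
Qed.

Lemma opnorm_le_zero I J (c : C) : 0 <= c -> opnorm_le (fun (_ : I) (_ : J) => 0 : C) c.
Proof.
move=> c0; split=> // v; rewrite big1 ?mulr_ge0 ?exprn_ge0 ?sumr_ge0 // => i _.
  exact: exprn_ge0.
by rewrite big1 ?normr0 ?expr0n // => j _; rewrite mul0r.
Qed.

Lemma opnorm_scale I J (X : op C I J) (a c : C) :
  opnorm_le X c -> opnorm_le (opscale a X) (`|a| * c).
Proof.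
move=> [c0 Xc]; split=> [|v]; first by rewrite mulr_ge0.
have -> : \sum_i `|\sum_j opscale a X i j * v j| ^+ 2 =
          `|a| ^+ 2 * \sum_i `|\sum_j X i j * v j| ^+ 2.
  rewrite big_distrr; apply: eq_bigr => i _ /=; rewrite -exprMn -normrM big_distrr.
  by congr (`|_| ^+ 2); apply: eq_bigr => j _; rewrite /opscale -mulrA.
by rewrite exprMn -[leRHS]mulrA; apply: ler_wpM2l; [exact: exprn_ge0 | exact: Xc].
Qed.

Lemma opnorm_add I J (X Y : op C I J) (a b : C) :
  opnorm_le X a -> opnorm_le Y b -> opnorm_le (opadd X Y) (a + b).
Proof.
move=> HX HY; have [a0 Xa] := HX; have [b0 Yb] := HY.
have [a_eq0|a_gt0] := eqVneq a 0.
  move: HX; rewrite a_eq0 add0r => /opnorm_le0 X0.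
  by congr (opnorm_le _ _): HY; apply: op_ext => i j; rewrite /opadd X0 add0r.
have [b_eq0|b_gt0] := eqVneq b 0.
  move: HY; rewrite b_eq0 addr0 => /opnorm_le0 Y0.
  by congr (opnorm_le _ _): HX; apply: op_ext => i j; rewrite /opadd Y0 addr0.
have ar : a \is Num.real := ger0_real a0; have br : b \is Num.real := ger0_real b0.
have ab_gt0 : 0 < a * b by rewrite mulr_gt0 // lt_def ?a_gt0 ?b_gt0.
split=> [|v]; first by rewrite addr_ge0.
pose x i := \sum_j X i j * v j; pose y i := \sum_j Y i j * v j.
have -> : \sum_i `|\sum_j opadd X Y i j * v j| ^+ 2 = \sum_i `|x i + y i| ^+ 2.
  apply: eq_bigr => i _; rewrite /x /y -big_split /=.
  by congr (`|_| ^+ 2); apply: eq_bigr => j _; rewrite mulrDl.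
(* [a b |x + y|^2 + |b x - a y|^2 = (a + b) (b |x|^2 + a |y|^2)] *)
have pointwise i : a * b * `|x i + y i| ^+ 2 <=
    (a + b) * b * `|x i| ^+ 2 + (a + b) * a * `|y i| ^+ 2.
  rewrite -subr_ge0 (_ : _ - _ = `|b * x i - a * y i| ^+ 2) ?exprn_ge0 //.
  by rewrite !normCK !rmorphB !rmorphD !rmorphM /= !(conj_Creal ar) !(conj_Creal br); ring.
rewrite -(ler_pM2l ab_gt0) big_distrr /=; apply: le_trans (ler_sum _ (fun i _ => pointwise i)) _.
rewrite big_split /= -!big_distrr /=.
apply: le_trans (lerD (ler_wpM2l _ (Xa v)) (ler_wpM2l _ (Yb v))) _; rewrite ?mulr_ge0 ?addr_ge0 //.
by rewrite le_eqVlt; apply/orP; left; apply/eqP; ring.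
Qed.

Lemma opnorm_sub I J (X Y : op C I J) (a b : C) :
  opnorm_le X a -> opnorm_le Y b -> opnorm_le (opsub X Y) (a + b).
Proof.
move=> Xa /(opnorm_scale (-1)); rewrite normrN normr1 mul1r => Yb.
by congr (opnorm_le _ _): (opnorm_add Xa Yb); apply: op_ext => i j; rewrite /opadd /opscale mulN1r.
Qed.

Lemma opnorm_subC I J (X Y : op C I J) (c : C) :
  opnorm_le (opsub X Y) c -> opnorm_le (opsub Y X) c.
Proof.
move=> /(opnorm_scale (-1)); rewrite normrN normr1 mul1r.
by congr (opnorm_le _ _); apply: op_ext => i j; rewrite /opsub /opscale mulN1r opprB.
Qed.

Definition blockdiag (B K : finType) (N : B -> op C K K) : op C (B * K)%type (B * K)%type :=
  fun x y => if x.1 == y.1 then N x.1 x.2 y.2 else 0.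

Lemma blockdiag_hermitian (B K : finType) (N : B -> op C K K) :
  (forall b, is_hermitian (N b)) -> is_hermitian (blockdiag N).
Proof.
move=> HN x y; rewrite /blockdiag eq_sym.
by case: eqP => [->|_]; [apply: HN | rewrite conjC0].
Qed.

Lemma opnorm_blockdiag (B K : finType) (N : B -> op C K K) (c : C) :
  0 <= c -> (forall b, opnorm_le (N b) c) -> opnorm_le (blockdiag N) c.
Proof.
move=> c0 HN; split=> // v; rewrite sum_pair [X in _ <= _ * X]sum_pair big_distrr /=.
apply: ler_sum => b _; have [_ /(_ (fun k => v (b, k)))] := HN b.
congr (_ <= _); apply: eq_bigr => k _; congr (`|_| ^+ 2).
rewrite sum_pair (bigD1 b) //= [X in _ + X]big1 ?addr0.
  by apply: eq_bigr => k' _; rewrite /blockdiag eqxx.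
by move=> b' /negbTE b'b; apply: big1 => k' _; rewrite /blockdiag /= eq_sym b'b mul0r.
Qed.

End OperatorNorm.

Section SpectralWindow.
Variable C : numClosedFieldType.
Variables (I : finType) (T : op C I I) (tm tp : C).

Definition window_shift (k : I) : C :=
  if tm <= eigvals T k <= tp then eigvals T k - (tm + tp) / 2 else 0.

Definition window_part : op C I I := diagop (eigvecs T) window_shift.

Lemma norm_window_shift k : tm <= tp -> `|window_shift k| <= (tp - tm) / 2.
Proof.
move=> tmp; rewrite /window_shift; case: ifP => [/andP[lo hi]|_].
  have lo' : 0 <= eigvals T k - tm by rewrite subr_ge0.
  have hi' : 0 <= tp - eigvals T k by rewrite subr_ge0.
  have -> : eigvals T k - (tm + tp) / 2 = ((eigvals T k - tm) - (tp - eigvals T k)) / 2.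
    by field.
  rewrite normrM [`|_^-1|]ger0_norm ?invr_ge0 ?ler0n // ler_pM2r ?invr_gt0 ?ltr0n //.
  rewrite real_ler_norml ?(realB (ger0_real lo') (ger0_real hi')) //.
  apply/andP; split; rewrite -subr_ge0.
    by rewrite opprK (_ : _ + _ = (eigvals T k - tm) *+ 2) ?mulrn_wge0 //; ring.
  by rewrite (_ : _ - _ = (tp - eigvals T k) *+ 2) ?mulrn_wge0 //; ring.
by rewrite normr0 divr_ge0 ?subr_ge0 ?ler0n.
Qed.

Lemma window_shift_real k : window_shift k \is Num.real.
Proof.
rewrite /window_shift; case: ifP => [/andP[lo hi]|_]; last exact: real0.
rewrite (_ : _ - _ = ((eigvals T k - tm) - (tp - eigvals T k)) / 2); last by field.
by rewrite realM ?realV ?realn // realB // ger0_real // subr_ge0.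
Qed.

End SpectralWindow.

Section SpectralProjection.
Variable C : numClosedFieldType.
Variables (I : finType) (T P : op C I I) (tm tp : C).
Hypotheses (HT : is_hermitian T) (HP : spec_proj_out T tm tp P).

Lemma spec_proj_outE :
  P = diagop (eigvecs T) (fun k => if tm <= eigvals T k <= tp then 0 else 1).
Proof.
have [HU UU _ TE] := hermitian_spectral HT.
set U := eigvecs T in HU UU TE *; set L := eigvals T in TE *.
have PU : opmul P U = fun m k => (if tm <= L k <= tp then 0 else 1) * U m k.
  apply: op_ext => m k.
  have eig : forall i, \sum_j T i j * U j k = L k * U i k.
    by rewrite TE; apply: diagop_eigen.
  by have := HP eig; case: ifP => _ /(_ m); rewrite /opmul => ->; rewrite ?mul0r ?mul1r.
rewrite -[LHS]opmul1r -UU -opmulA PU; apply: op_ext => i j.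
by rewrite /opmul /opadj /diagop.
Qed.

Lemma window_partE :
  window_part T tm tp = opsub (opsub T (opscale ((tm + tp) / 2) (opid I)))
                              (opmul (opsub T (opscale ((tm + tp) / 2) (opid I))) P).
Proof.
have [HU UU _ TE] := hermitian_spectral HT.
rewrite /window_part spec_proj_outE [in opsub T _]TE -(diagop_const _ UU).
rewrite !diagop_sub diagop_mul // diagop_sub.
congr diagop; apply: functional_extensionality => k.
by rewrite /window_shift; case: ifP => _; ring.
Qed.

Hypotheses (tm_real : tm \is Num.real) (tp_real : tp \is Num.real).

Lemma outside_part_hermitian :
  is_hermitian (opmul (opsub T (opscale ((tm + tp) / 2) (opid I))) P).
Proof.
set Tc := opsub T _; have -> : opmul Tc P = opsub Tc (window_part T tm tp).
  by rewrite window_partE -/Tc opsub_subK.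
apply: hermitian_sub; last exact/diagop_hermitian/window_shift_real.
by apply: hermitian_sub HT _; apply: hermitian_scale_id; rewrite realM ?realD ?realV ?realn.
Qed.

End SpectralProjection.

Section HeisenbergPicture.
Variable C : numClosedFieldType.
Implicit Types I J F : finType.

Lemma heis_sub I J (Phi : op C I I -> op C J J) (Y1 Y2 : op C J J) :
  heis Phi (opsub Y1 Y2) = opsub (heis Phi Y1) (heis Phi Y2).
Proof.
apply: op_ext => i j; rewrite /heis /opsub /optr /opmul -sumrB.
by apply: eq_bigr => x _; rewrite -sumrB; apply: eq_bigr => y _; rewrite mulrBl.
Qed.

Lemma heis_scale I J (Phi : op C I I -> op C J J) (a : C) (Y : op C J J) :
  heis Phi (opscale a Y) = opscale a (heis Phi Y).
Proof.
apply: op_ext => i j; rewrite /heis /opscale /optr /opmul big_distrr.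
by apply: eq_bigr => x _; rewrite big_distrr; apply: eq_bigr => y _ /=; rewrite mulrA.
Qed.

Lemma heis_sum I J (B : finType) (Phi : op C I I -> op C J J) (A : {pred B})
    (Y : B -> op C J J) :
  heis Phi (fun x y => \sum_(b in A) Y b x y) = fun i j => \sum_(b in A) heis Phi (Y b) i j.
Proof.
apply: op_ext => i j; rewrite /heis /optr /opmul [RHS]exchange_big; apply: eq_bigr => x _.
by rewrite [RHS]exchange_big; apply: eq_bigr => y _; rewrite big_distrl.
Qed.

Lemma optr_ptrace2 I F (Y : op C I I) (X : op C (I * F)%type (I * F)%type) :
  optr (opmul Y (ptrace2 X)) = optr (opmul (optens Y (opid F)) X).
Proof.
rewrite /optr /opmul /ptrace2 /optens /opid sum_pair; apply: eq_bigr => i _.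
under eq_bigr do rewrite big_distrr /=.
rewrite exchange_big; apply: eq_bigr => f _ /=.
rewrite sum_pair; apply: eq_bigr => i' _ /=.
rewrite (bigD1 f) //= eqxx mulr1 big1 ?addr0 // => f' /negbTE.
by rewrite eq_sym => ->; rewrite mulr0 mul0r.
Qed.

Variables (n : nat) (d : 'I_n -> nat) (L F : finType).
Variable V : op C (basisA d * F)%type L.
Let A := basisA d.

Lemma heis_encE (Y : op C A A) :
  heis (enc V) Y = opmul (opmul (opadj V) (optens Y (opid F))) V.
Proof.
apply: op_ext => i j; rewrite /heis /enc optr_ptrace2 -!opmulA optrC -!opmulA.
by rewrite optr_unitop opmulA.
Qed.

Lemma optr_heis_enc (Y : op C A A) (s : op C L L) :
  optr (opmul (heis (enc V) Y) s) = optr (opmul Y (enc V s)).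
Proof.
by rewrite heis_encE /enc optr_ptrace2 !opmulA optrC !opmulA.
Qed.

Lemma heis_enc_hermitian (Y : op C A A) :
  is_hermitian Y -> is_hermitian (heis (enc V) Y).
Proof.
move=> /hermitianP HY; apply/hermitianP.
by rewrite heis_encE !opadj_mul opadjK optens_adj HY opadj_id opmulA.
Qed.

Lemma heis_enc_id : is_isometry V -> heis (enc V) (opid A) = opid L.
Proof. by move=> /isometryP HV; rewrite heis_encE optens_id opmul1r. Qed.

End HeisenbergPicture.

Lemma sum_partition (C : numClosedFieldType) (X Y : finType) (r : X -> Y) (P : pred X)
    (G : Y -> X -> C) :
  \sum_a \sum_(x | P x && (r x == a)) G a x = \sum_(x | P x) G (r x) x.
Proof.
rewrite [RHS](partition_big r xpredT) //; apply: eq_bigr => a _.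
by apply: eq_big => // x /andP[_ /eqP ->].
Qed.

Section Subsystem.
Variable C : numClosedFieldType.
Variables (n : nat) (d : 'I_n -> nat) (al : {set 'I_n}).
Implicit Types (x y : basisA d) (X Y : op C (basisSub d al) (basisSub d al)).

Lemma agree_out_sym x y : agree_out al x y = agree_out al y x.
Proof.
by apply/forallP/forallP => H i; apply/implyP => /(implyP (H i)) /eqP ->.
Qed.

Lemma agree_out_res x y : agree_out al x y && (res al x == res al y) = (x == y).
Proof.
apply/andP/eqP => [[/forallP out /eqP inside]|->]; last first.
  by split=> //; apply/forallP => i; apply/implyP.
apply/ffunP => i; have [i_al|i_out] := boolP (i \in al).
  have := congr1 (fun z : basisSub d al => z (exist (fun k => k \in al) i i_al)) inside.
  by rewrite /res !ffunE.
exact/eqP/(implyP (out i)).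
Qed.

Lemma embed_sub X Y : embed (opsub X Y) = opsub (embed X) (embed Y).
Proof. by apply: op_ext => x y; rewrite /embed /opsub; case: ifP; rewrite ?subr0. Qed.

Lemma embed_scale (a : C) X : embed (opscale a X) = opscale a (embed X).
Proof. by apply: op_ext => x y; rewrite /embed /opscale; case: ifP; rewrite ?mulr0. Qed.

Lemma embed_id : embed (opid (basisSub d al)) = opid (basisA d) :> op C _ _.
Proof.
apply: op_ext => x y; rewrite /embed /opid -agree_out_res.
by case: (agree_out al x y).
Qed.

Lemma embed_hermitian X : is_hermitian X -> is_hermitian (embed X).
Proof.
move=> HX x y; rewrite /embed agree_out_sym; case: ifP => _; last by rewrite conjC0.
exact: HX.
Qed.

Lemma optr_ptrace_out (F : finType) X (Y : op C (basisA d * F)%type (basisA d * F)%type) :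
  optr (opmul X (ptrace2 (ptrace_out (al:=al) Y))) = optr (opmul (embed X) (ptrace2 Y)).
Proof.
pose Z x y := \sum_f Y (x, f) (y, f).
transitivity (\sum_a \sum_a' \sum_(x | res al x == a')
    \sum_(y | (res al y == a) && agree_out al x y) X a a' * Z x y).
  apply: eq_bigr => a _; apply: eq_bigr => a' _.
  rewrite /ptrace2 /ptrace_out /= exchange_big big_distrr; apply: eq_bigr => x _ /=.
  by rewrite exchange_big big_distrr.
rewrite exchange_big; under eq_bigr do rewrite exchange_big /=.
rewrite (sum_partition (res al) xpredT (fun a' x => \sum_a \sum_(y | _) X a a' * Z x y)).
rewrite /optr /opmul /ptrace2 [RHS]exchange_big; apply: eq_bigr => x _.
transitivity (\sum_(y | agree_out al x y) X (res al y) (res al x) * Z x y).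
  rewrite -(sum_partition (res al) (agree_out al x) (fun a y => X a (res al x) * Z x y)).
  by apply: eq_bigr => a _; apply: eq_bigl => y; rewrite andbC.
rewrite big_mkcond; apply: eq_bigr => y _.
by rewrite /embed agree_out_sym; case: ifP; rewrite ?mul0r.
Qed.

End Subsystem.

Lemma optr_blockdiag_tens (C : numClosedFieldType) (B E F : finType)
    (N : B -> op C E E) (q : B -> C) (G : B -> op C (E * F)%type (E * F)%type) :
  optr (opmul (optens (blockdiag N) (opid F))
    (fun x y => if x.1.1 == y.1.1 then q x.1.1 * G x.1.1 (x.1.2, x.2) (y.1.2, y.2) else 0))
  = \sum_b q b * optr (opmul (optens (N b) (opid F)) (G b)).
Proof.
rewrite /optr /opmul /optens /blockdiag !sum_pair; apply: eq_bigr => b _.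
rewrite big_distrr [RHS]sum_pair; apply: eq_bigr => e _; apply: eq_bigr => f _ /=.
rewrite !sum_pair (bigD1 b) //= [X in _ + X]big1 ?addr0.
  rewrite eqxx big_distrr; apply: eq_bigr => e' _; rewrite big_distrr.
  by apply: eq_bigr => f' _; rewrite mulrCA.
by move=> b' /negbTE b'b; apply: big1 => e' _; apply: big1 => f' _; rewrite /= eq_sym b'b !mul0r.
Qed.

Section ComplementaryChannel.
Variable C : numClosedFieldType.
Variables (n : nat) (d : 'I_n -> nat) (L F E : finType).
Variables (V : op C (basisA d * F)%type L) (q : {set 'I_n} -> C).
Variable W : forall al : {set 'I_n}, op C E (basisSub d al).
Arguments W : clear implicits.

Lemma heis_compl_chan_blockdiag (N : {set 'I_n} -> op C E E) :
  heis (compl_chan q W V) (optens (blockdiag N) (opid F)) =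
  fun i j => \sum_al q al * heis (enc V) (embed (opmul (opmul (opadj (W al)) (N al)) (W al))) i j.
Proof.
apply: op_ext => i j; rewrite /heis /compl_chan.
set Y := opmul (opmul V _) (opadj V).
rewrite (optr_blockdiag_tens _ _ (fun al => opmul (opmul (optens (W al) (opid F))
  (ptrace_out (al:=al) Y)) (opadj (optens (W al) (opid F))))).
apply: eq_bigr => al _; congr (_ * _).
rewrite optens_adj opadj_id optrC opmulA optens_mul opmul1l.
rewrite opmulA optrC opmulA optens_mul opmul1l optrC.
by rewrite -optr_ptrace2 optr_ptrace_out.
Qed.

End ComplementaryChannel.

Lemma opnorm_le_expectation (C : numClosedFieldType) (I : finType) (H : op C I I) (eta : C) :
  is_hermitian H -> 0 <= eta ->
  (forall s, is_state s -> `|optr (opmul H s)| <= eta) -> opnorm_le H eta.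
Proof.
move=> HH eta0 Hs; have [HU _ _ HE] := hermitian_spectral HH.
set U := eigvecs H in HU HE *; set mu := eigvals H in HE *.
rewrite HE; apply: opnorm_diagop => // k.
have Ukk : \sum_l (U l k)^* * U l k = 1.
  by have := HU k k; rewrite /opmul /opadj eqxx.
pose s : op C I I := fun l l' => U l k * (U l' k)^*.
have s_state : is_state s.
  split=> [l l'|v|]; first by rewrite /s rmorphM /= conjCK mulrC.
    rewrite (_ : \sum_i _ = `|\sum_i (v i)^* * U i k| ^+ 2) ?exprn_ge0 //.
    rewrite normCK big_distrl; apply: eq_bigr => i _ /=; rewrite rmorph_sum big_distrr.
    by apply: eq_bigr => j _ /=; rewrite /s rmorphM /= conjCK; ring.
  by rewrite /optr -Ukk; apply: eq_bigr => l _; rewrite mulrC.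
have <- : optr (opmul H s) = mu k.
  rewrite /optr /opmul /s -[RHS]mulr1 -Ukk big_distrr; apply: eq_bigr => i _ /=.
  transitivity ((\sum_j H i j * U j k) * (U i k)^*).
    by rewrite big_distrl; apply: eq_bigr => j _; rewrite mulrA.
  by rewrite HE diagop_eigen //; ring.
exact: Hs.
Qed.

Lemma bigmax_ge0_ub (C : numClosedFieldType) (T : eqType) (r : seq T) (P : pred T) (f : T -> C) :
  (forall i, P i -> 0 <= f i) ->
  0 <= \big[Num.max/0]_(i <- r | P i) f i /\
  forall j, j \in r -> P j -> f j <= \big[Num.max/0]_(i <- r | P i) f i.
Proof.
move=> f0; elim: r => [|i r [m0 ub]]; first by rewrite big_nil.
rewrite big_cons; case: ifP => Pi; last first.
  by split=> // j; rewrite in_cons => /predU1P[->|/ub//]; rewrite Pi.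
have cmp := real_comparable (ger0_real (f0 i Pi)) (ger0_real m0).
split=> [|j]; first by rewrite comparable_le_max // m0 orbT.
by rewrite in_cons comparable_le_max // => /predU1P[-> _|/ub jub /jub ->]; rewrite ?lexx ?orbT.
Qed.

Section Decoder.
Variable C : numClosedFieldType.
Variables (n : nat) (d : 'I_n -> nat) (L F E : finType).
Variable V : op C (basisA d * F)%type L.
Variables (S : {set {set 'I_n}}) (T : forall al : {set 'I_n}, op C (basisSub d al) (basisSub d al)).
Variables (tm tp : {set 'I_n} -> C) (q : {set 'I_n} -> C).
Variable W : forall al : {set 'I_n}, op C E (basisSub d al).
Arguments T : clear implicits.
Arguments W : clear implicits.

Definition decoder_block (al : {set 'I_n}) : op C E E :=
  opscale (if al \in S then (q al)^-1 else 0)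
    (opmul (opmul (W al) (window_part (T al) (tm al) (tp al))) (opadj (W al))).

Definition decoder := blockdiag decoder_block.

Hypothesis HqS : forall al, al \in S -> 0 < q al.

Lemma decoder_hermitian : is_hermitian decoder.
Proof.
apply: blockdiag_hermitian => al.
rewrite /decoder_block /window_part diagop_conj diagop_scale.
apply: diagop_hermitian => k; rewrite realM ?window_shift_real //.
by case: ifP => [/HqS/gtr0_real|_]; rewrite ?realV ?real0.
Qed.

Hypotheses (HT : forall al, al \in S -> is_hermitian (T al))
  (Ht : forall al, al \in S -> [/\ tm al \is Num.real, tp al \is Num.real & tm al <= tp al])
  (HW : forall al, is_isometry (W al)).

Lemma opnorm_decoder :
  opnorm_le decoder (\big[Num.max/0]_(al in S) ((tp al - tm al) / (2 * q al))).
Proof.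
pose f al := (tp al - tm al) / (2 * q al).
have f_ge0 al : al \in S -> 0 <= f al.
  move=> alS; have [_ _ le] := Ht alS.
  by rewrite /f divr_ge0 ?subr_ge0 // ltW // mulr_gt0 ?HqS.
have [max_ge0 max_ub] := bigmax_ge0_ub (index_enum _) f_ge0.
apply: opnorm_blockdiag => // al; rewrite /decoder_block.
case: ifPn => alS; last first.
  by rewrite opscale0; apply: opnorm_le_zero.
apply: opnorm_le_trans (max_ub _ (mem_index_enum al) alS).
rewrite /window_part diagop_conj diagop_scale.
have [HU _ _ _] := hermitian_spectral (HT alS); have [_ _ le] := Ht alS.
apply: opnorm_diagop => [||k]; [exact: isometry_mul | exact: f_ge0 |].
have q_gt0 := HqS alS; have qV_ge0 : 0 <= (q al)^-1 by rewrite invr_ge0 ltW.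
have -> : f al = (q al)^-1 * ((tp al - tm al) / 2) by rewrite /f; field; rewrite gt_eqF.
by rewrite normrM ger0_norm // ler_wpM2l // norm_window_shift.
Qed.

Variable P : forall al : {set 'I_n}, op C (basisSub d al) (basisSub d al).
Arguments P : clear implicits.
Hypotheses (HV : is_isometry V)
  (HP : forall al, al \in S -> spec_proj_out (T al) (tm al) (tp al) (P al)).

Lemma heis_embed_window_part al : al \in S ->
  heis (enc V) (embed (window_part (T al) (tm al) (tp al))) =
  opsub (opsub (heis (enc V) (embed (T al))) (opscale ((tm al + tp al) / 2) (opid L)))
    (heis (enc V) (embed (opmul (opsub (T al) (opscale ((tm al + tp al) / 2) (opid _))) (P al)))).
Proof.
move=> alS; rewrite (window_partE (HT alS) (HP alS)) !embed_sub embed_scale embed_id.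
by rewrite !heis_sub heis_scale heis_enc_id.
Qed.

Lemma heis_compl_chan_decoder :
  heis (compl_chan q W V) (optens decoder (opid F)) =
  opsub (opsub (heis (enc V) (TA S T))
               (opscale (\sum_(al in S) (tm al + tp al) / 2) (opid L)))
        (heis (enc V) (etaop S T tm tp P)).
Proof.
rewrite heis_compl_chan_blockdiag; apply: op_ext => i j.
transitivity (\sum_(al in S) heis (enc V) (embed (window_part (T al) (tm al) (tp al))) i j).
  rewrite [RHS]big_mkcond; apply: eq_bigr => al _.
  rewrite /decoder_block opmulZr opmulZl isometry_conjK // embed_scale heis_scale /opscale.
  by case: ifP => alS; rewrite ?mul0r ?mulr0 // mulrA mulfV ?mul1r // gt_eqF ?HqS.
under eq_bigr => al alS do rewrite heis_embed_window_part //.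
by rewrite /TA /etaop !heis_sum /opsub /opscale /= !sumrB -big_distrl.
Qed.

Lemma opnorm_heis_etaop (eta : C) : 0 <= eta ->
  (forall s, is_state s -> `|optr (opmul (etaop S T tm tp P) (enc V s))| <= eta) ->
  opnorm_le (heis (enc V) (etaop S T tm tp P)) eta.
Proof.
move=> eta0 Heta; apply: opnorm_le_expectation => // [|s /Heta]; last by rewrite optr_heis_enc.
apply: heis_enc_hermitian => x y; rewrite rmorph_sum; apply: eq_bigr => al alS.
have [tm_real tp_real _] := Ht alS.
by apply: embed_hermitian; apply: outside_part_hermitian (HT alS) (HP alS) tm_real tp_real.
Qed.

End Decoder.

Theorem lemma1 (C : numClosedFieldType) (n : nat) (d : 'I_n -> nat)
  (L F E : finType)
  (V : op C (basisA d * F)%type L) (HV : is_isometry V)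
  (TL : op C L L) (HTL : is_hermitian TL)
  (S : {set {set 'I_n}})
  (T : forall al : {set 'I_n}, op C (basisSub d al) (basisSub d al))
  (HT : forall al, al \in S -> is_hermitian (T al))
  (nu delta : C) (Hnu : nu \is Num.real) (Hdelta : 0 <= delta)
  (Hclose : opnorm_le (opsub (opsub TL (opscale nu (opid L)))
                             (heis (enc V) (TA S T))) delta)
  (tm tp : {set 'I_n} -> C)
  (Ht : forall al, al \in S -> [/\ tm al \is Num.real, tp al \is Num.real & tm al <= tp al])
  (P : forall al : {set 'I_n}, op C (basisSub d al) (basisSub d al))
  (HP : forall al, al \in S -> spec_proj_out (T al) (tm al) (tp al) (P al))
  (eta : C) (Heta0 : 0 <= eta)
  (Heta : forall sigma : op C L L, is_state sigma ->
            `| optr (opmul (etaop S T tm tp P) (enc V sigma)) | <= eta)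
  (q : {set 'I_n} -> C) (Hq0 : forall al, 0 <= q al) (Hq1 : \sum_al q al = 1)
  (HqS : forall al, al \in S -> 0 < q al)
  (W : forall al : {set 'I_n}, op C E (basisSub d al))
  (HW : forall al, is_isometry (W al)) :
  exists Z : op C ({set 'I_n} * E)%type ({set 'I_n} * E)%type,
    [/\ is_hermitian Z,
        opnorm_le (opsub (heis (compl_chan q W V) (optens Z (opid F)))
                         (opsub TL (opscale (nu + \sum_(al in S) (tm al + tp al) / 2)
                                            (opid L))))
                  (delta + eta)
      & opnorm_le Z (\big[Num.max/0]_(al in S) ((tp al - tm al) / (2 * q al)))].
Proof.
exists (decoder S T tm tp q W); split.
- exact: decoder_hermitian.
- rewrite (heis_compl_chan_decoder HqS HT HW HV HP).
  set hT := heis (enc V) (TA S T); set hEta := heis (enc V) (etaop S T tm tp P).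
  have -> : opsub (opsub (opsub hT (opscale (\sum_(al in S) (tm al + tp al) / 2) (opid L))) hEta)
      (opsub TL (opscale (nu + \sum_(al in S) (tm al + tp al) / 2) (opid L)))
      = opsub (opsub hT (opsub TL (opscale nu (opid L)))) hEta.
    by apply: op_ext => i j; rewrite /opsub /opscale; ring.
  exact: opnorm_sub (opnorm_subC Hclose) (opnorm_heis_etaop HT Ht HP Heta0 Heta).
- exact: opnorm_decoder.
Qed.
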